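(* Let $(A,M,\rho,[\cdot,\cdot]_A,\langle\cdot,\cdot\rangle_A)$ be a transitive Euclidean Lie algebroid, with $\mathcal{G}=\ker\rho$, splitting $\gamma$, induced metric $\langle\cdot,\cdot\rangle_{TM}$ (Levi-Civita connection $\nabla^M$, curvature $R^M$), and let $\nabla^\gamma,\Omega^\gamma,\nabla^A,T,H$ be as in the context. Then for all $X,Y,Z\in\Gamma(TM)$ and $U\in\Gamma(\mathcal{G})$: $R^{\nabla^A}(X,Y)Z^\gamma=\big\{(R^M(X,Y)Z)^\gamma+H_{Y^\gamma}H_{X^\gamma}Z^\gamma-H_{X^\gamma}H_{Y^\gamma}Z^\gamma\big\}+\big\{T_{H_{X^\gamma}Z^\gamma}Y^\gamma-T_{H_{Y^\gamma}Z^\gamma}X^\gamma-\tfrac12\nabla^{M,\gamma}_Z\Omega^\gamma(X,Y)\big\}$, $(R^{\nabla^A}(X,Y)U)^t=R^{\nabla^\gamma}(X,Y)U+H_{Y^\gamma}H_{X^\gamma}U-H_{X^\gamma}H_{Y^\gamma}U+T_U[X,Y]^\gamma-T_{\nabla^\gamma_YU}X^\gamma-\nabla^\gamma_X(T_UY^\gamma)-T_{T_UY^\gamma}X^\gamma+T_{\nabla^\gamma_XU}Y^\gamma+\nabla^\gamma_Y(T_UX^\gamma)+T_{T_UX^\gamma}Y^\gamma$, $\langle R^{\nabla^A}(X,Y)U,Z^\gamma\rangle_A=-\langle R^{\nabla^A}(X,Y)Z^\gamma,U\rangle_A$, where $\nabla^{M,\gamma}_Z\Omega^\gamma(X,Y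)=\nabla^\gamma_Z(\Omega^\gamma(X,Y))-\Omega^\gamma(X,\nabla^M_ZY)-\Omega^\gamma(\nabla^M_ZX,Y)$.
   Context: A transitive Lie algebroid is a vector bundle $\pi_A:A\to M$ with a Lie bracket $[\cdot,\cdot]_A$ on $\Gamma(A)$ and a surjective bundle map $\rho:A\to TM$ with $[a,fb]_A=f[a,b]_A+\rho(a)(f)b$; it is Euclidean if $A$ carries a fiberwise inner product $\langle\cdot,\cdot\rangle_A$. Let $\mathcal{G}=\ker\rho$, $\mathcal{G}^\perp$ its orthogonal, $a^t$ and $a^\perp$ the components of $a$ in $\mathcal{G}$ and $\mathcal{G}^\perp$, and $\gamma:TM\to\mathcal{G}^\perp$ the inverse of $\rho|_{\mathcal{G}^\perp}$; write $X^\gamma=\gamma(X)$. The metric on $M$ is $\langle X,Y\rangle_{TM}=\langle X^\gamma,Y^\gamma\rangle_A$. Define $\nabla^\gamma_XU=[X^\gamma,U]_A$ ($U\in\Gamma(\mathcal{G})$), a connection on $\mathcal{G}$, and $\Omega^\gamma(X,Y)=[X,Y]^\gamma-[X^\gamma,Y^\gamma]_A\in\Gamma(\mathcal{G})$. The Levi-Civita $A$-connection $\mathcal{D}$ is defined by $2\langle\mathcal{D}_ab,c\rangle_A=\rho(a)\langle b,c\rangle_A+\rho(b)\langle a,c\rangle_A-\rho(c)\langle a,b\rangle_A+\langle[c,a]_A,b\rangle_A+\langle[c,b]_A,a\rangle_A+\langle[a,b]_A,c\rangle_A$. Set $\nabla^A_Xa=\mathcal{D}_{X^\gamma}a$ (a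 connection on the vector bundle $A$) and define tensors $T_ab=(\mathcal{D}_{a^t}b^t)^\perp+(\mathcal{D}_{a^t}b^\perp)^t$, $H_ab=(\mathcal{D}_{a^\perp}b^t)^\perp+(\mathcal{D}_{a^\perp}b^\perp)^t$. All curvatures use the convention $R(X,Y)=\nabla_{[X,Y]}-\nabla_X\nabla_Y+\nabla_Y\nabla_X$. *)

(* Algebraic (Lie–Rinehart style) model of a transitive
   Euclidean Lie algebroid: F plays the role of C^oo(M), VT of Gamma(TM),
   VA of Gamma(A). *)
From HB Require Import structures.
From mathcomp Require Import all_boot all_order all_algebra.
Set Implicit Arguments. Unset Strict Implicit. Unset Printing Implicit Defensive.
Import GRing.Theory.
Local Open Scope ring_scope.

Section Defs.
Variable F : comUnitRingType.

Definition is_vector_fields (VT : lmodType F)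
    (act : VT -> F -> F) (brT : VT -> VT -> VT) : Prop :=
  [/\ forall X f g, act X (f + g) = act X f + act X g,
      forall X f g, act X (f * g) = act X f * g + f * act X g,
      forall f X Y h, act (f *: X + Y) h = f * act X h + act Y h,
      forall X Y, (forall h, act X h = act Y h) -> X = Y &
      forall X Y h, act (brT X Y) h = act X (act Y h) - act Y (act X h)].

Definition is_transitive_Lie_algebroid (VT VA : lmodType F)
    (act : VT -> F -> F) (brT : VT -> VT -> VT)
    (rho : VA -> VT) (brA : VA -> VA -> VA) : Prop :=
  (forall f a b, rho (f *: a + b) = f *: rho a + rho b) /\
  (forall Y, exists a, rho a = Y) /\
  (forall a b c, brA (a + b) c = brA a c + brA b c) /\
  (forall a b, brA a b = - brA b a) /\
  (forall a b c, brA a (brA b c) + brA b (brA c a) + brA c (brA a b) = 0) /\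
  (forall a f b, brA a (f *: b) = f *: brA a b + act (rho a) f *: b) /\
  (forall a b, rho (brA a b) = brT (rho a) (rho b)).

Definition is_fiber_metric (V : lmodType F) (g : V -> V -> F) : Prop :=
  [/\ forall f a b c, g (f *: a + b) c = f * g a c + g b c,
      forall a b, g a b = g b a &
      forall a, g a a = 0 -> a = 0].

(* pt a = a^t, the orthogonal projection onto G = ker rho. *)
Definition is_vertical_projection (VT VA : lmodType F)
    (rho : VA -> VT) (gA : VA -> VA -> F) (pt : VA -> VA) : Prop :=
  forall a, rho (pt a) = 0 /\ (forall u, rho u = 0 -> gA (a - pt a) u = 0).

Definition perp (VA : lmodType F) (pt : VA -> VA) (a : VA) : VA := a - pt a.

Definition is_splitting (VT VA : lmodType F)
    (rho : VA -> VT) (gA : VA -> VA -> F) (gam : VT -> VA) : Prop :=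
  forall X, rho (gam X) = X /\ (forall u, rho u = 0 -> gA (gam X) u = 0).

Definition gT (VT VA : lmodType F) (gA : VA -> VA -> F) (gam : VT -> VA)
  (X Y : VT) : F := gA (gam X) (gam Y).

(* Koszul formula defining a Levi-Civita (anc-)connection D. *)
Definition koszul (VT V : lmodType F) (act : VT -> F -> F) (anc : V -> VT)
    (br : V -> V -> V) (g : V -> V -> F) (D : V -> V -> V) : Prop :=
  forall a b c,
    2%:R * g (D a b) c =
      act (anc a) (g b c) + act (anc b) (g a c) - act (anc c) (g a b)
      + g (br c a) b + g (br c b) a + g (br a b) c.

(* Curvature, convention R(X,Y) = nab_[X,Y] - nab_X nab_Y + nab_Y nab_X. *)
Definition curv (VT V : lmodType F) (brT : VT -> VT -> VT)
    (nab : VT -> V -> V) (X Y : VT) (s : V) : V :=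
  nab (brT X Y) s - nab X (nab Y s) + nab Y (nab X s).

Definition nabA (VT VA : lmodType F) (D : VA -> VA -> VA) (gam : VT -> VA)
  (X : VT) (a : VA) : VA := D (gam X) a.

Definition nabg (VT VA : lmodType F) (brA : VA -> VA -> VA) (gam : VT -> VA)
  (X : VT) (U : VA) : VA := brA (gam X) U.

Definition Omega (VT VA : lmodType F) (brT : VT -> VT -> VT)
  (brA : VA -> VA -> VA) (gam : VT -> VA) (X Y : VT) : VA :=
  gam (brT X Y) - brA (gam X) (gam Y).

Definition Tt (VA : lmodType F) (D : VA -> VA -> VA) (pt : VA -> VA)
  (a b : VA) : VA :=
  perp pt (D (pt a) (pt b)) + pt (D (pt a) (perp pt b)).

Definition Ht (VA : lmodType F) (D : VA -> VA -> VA) (pt : VA -> VA)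
  (a b : VA) : VA :=
  perp pt (D (perp pt a) (pt b)) + pt (D (perp pt a) (perp pt b)).

Definition nabMOmega (VT VA : lmodType F) (brT : VT -> VT -> VT)
  (brA : VA -> VA -> VA) (gam : VT -> VA) (nablaM : VT -> VT -> VT)
  (Z X Y : VT) : VA :=
  nabg brA gam Z (Omega brT brA gam X Y)
  - Omega brT brA gam X (nablaM Z Y) - Omega brT brA gam (nablaM Z X) Y.

End Defs.

From HB Require Import structures.
From mathcomp Require Import all_boot all_order all_algebra.
From mathcomp Require Import ring.
Set Implicit Arguments. Unset Strict Implicit. Unset Printing Implicit Defensive.
Import GRing.Theory.
Local Open Scope ring_scope.

(* Split sections of A into horizontal parts Z^gamma and vertical parts U.
   The Koszul formula gives the two basic rules
     D_{X^gamma} Z^gamma = (nabla^M_X Z)^gamma - Omega^gamma(X,Z)/2,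
     D_{X^gamma} U = nabla^gamma_X U + T_U X^gamma + H_{X^gamma} U,
   and expanding R(X,Y) = D_{[X,Y]^gamma} - D_{X^gamma} D_{Y^gamma}
   + D_{Y^gamma} D_{X^gamma} with them yields the first two formulas.  In the
   first one the five Omega-terms collapse to -1/2 nabla^{M,gamma}_Z
   Omega^gamma(X,Y) by torsion-freeness of nabla^M and the Bianchi identity
   for Omega^gamma, a consequence of the two Jacobi identities.  The third
   formula holds because nabla^A is a metric connection. *)

(* A reflexive decision procedure for equalities in an abelian group that
   hold as formal Z-linear combinations of atoms (atoms are compared up to
   conversion). *)
Inductive zexpr := ZVar of nat | ZAdd of zexpr & zexpr | ZOpp of zexpr | ZZero.

Fixpoint zeval (V : zmodType) (env : seq V) (e : zexpr) : V :=
  match e with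
  | ZVar n => env`_n
  | ZAdd a b => zeval env a + zeval env b
  | ZOpp a => - zeval env a
  | ZZero => 0
  end.

Fixpoint zcoef (i : nat) (e : zexpr) : int :=
  match e with
  | ZVar n => (n == i)%:Z
  | ZAdd a b => zcoef i a + zcoef i b
  | ZOpp a => - zcoef i a
  | ZZero => 0
  end.

Fixpoint zbound (e : zexpr) : nat :=
  match e with
  | ZVar n => n.+1
  | ZAdd a b => maxn (zbound a) (zbound b)
  | ZOpp a => zbound a
  | ZZero => 0
  end.

Lemma zeval_coef (V : zmodType) (env : seq V) e k : (zbound e <= k)%N ->
  zeval env e = \sum_(i < k) env`_i *~ zcoef i e.
Proof.
elim: e => [n|a IHa b IHb|a IHa|] /=.
- move=> lt_nk; rewrite (bigD1 (Ordinal lt_nk)) //= eqxx big1 ?addr0 // => i ne_in.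
  rewrite (_ : n == i = false) ?mulr0z //.
  by apply: contraNF ne_in => /eqP eq_ni; apply/eqP/val_inj.
- rewrite geq_max => /andP[ha hb]; rewrite IHa // IHb // -big_split /=.
  by apply: eq_bigr => i _; rewrite mulrzDr.
- by move=> h; rewrite IHa // -sumrN; apply: eq_bigr => i _; rewrite mulrNz.
- by move=> _; rewrite big1 // => i _; rewrite mulr0z.
Qed.

Lemma zeval_eq (V : zmodType) (env : seq V) e1 e2 :
  all (fun i => zcoef i e1 == zcoef i e2) (iota 0 (maxn (zbound e1) (zbound e2))) ->
  zeval env e1 = zeval env e2.
Proof.
move=> /allP same_coef; pose k := maxn (zbound e1) (zbound e2).
rewrite (@zeval_coef _ _ e1 k) ?leq_maxl // (@zeval_coef _ _ e2 k) ?leq_maxr //.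
by apply: eq_bigr => i _; rewrite (eqP (same_coef _ _)) // mem_iota ltn_ord.
Qed.

Ltac zconvertible t u :=
  match constr:(tt) with
  | _ => let _ := constr:(erefl t : t = u) in constr:(true)
  | _ => constr:(false)
  end.

Ltac zindex t env :=
  lazymatch env with
  | ?u :: ?r =>
      lazymatch zconvertible t u with
      | true => constr:(0%N)
      | false => let n := zindex t r in constr:(n.+1)
      end
  end.

Ltac zatoms t env :=
  lazymatch t with
  | ?a + ?b => let env := zatoms a env in zatoms b env
  | - ?a => zatoms a env
  | 0 => env
  | _ => let rec insert env :=
           lazymatch env with
           | ?u :: ?r =>
               lazymatch zconvertible t u with
               | true => env
               | false => let r := insert r in constr:(u :: r)
               end
           | _ => constr:(t :: env)
           end in insert env
  end.

Ltac zreify env t :=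
  lazymatch t with
  | ?a + ?b => let ea := zreify env a in let eb := zreify env b in constr:(ZAdd ea eb)
  | - ?a => let ea := zreify env a in constr:(ZOpp ea)
  | 0 => constr:(ZZero)
  | _ => let n := zindex t env in constr:(ZVar n)
  end.

Ltac zmodule :=
  lazymatch goal with |- @eq ?V ?l ?r =>
    let env := zatoms l (@nil V) in
    let env := zatoms r env in
    let el := zreify env l in
    let er := zreify env r in
    change (zeval env el = zeval env er); apply: zeval_eq; vm_compute; reflexivity
  end.

Lemma eq_of_subr_eq (V : zmodType) (u v l r : V) : u = v -> l - r = u - v -> l = r.
Proof. by move=> -> /eqP; rewrite subrr subr_eq0 => /eqP. Qed.

Lemma add_nmod_morphism (U V : zmodType) (f : U -> V) :
  {morph f : x y / x + y} -> nmod_morphism f.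
Proof. by move=> fD; split=> //; apply: (addrI (f 0)); rewrite -fD !addr0. Qed.

Section FiberMetric.
Variables (F : comUnitRingType) (V : lmodType F) (g : V -> V -> F).
Hypothesis Hg : is_fiber_metric g.

Lemma metricC a b : g a b = g b a.
Proof. by case: Hg. Qed.

Lemma metricDl c : {morph g^~ c : a b / a + b}.
Proof. by case: Hg => gL _ _ a b; rewrite -{1}[a]scale1r gL mul1r. Qed.

Lemma metric0l c : g 0 c = 0.
Proof. by apply: (addrI (g 0 c)); rewrite -metricDl !addr0. Qed.

Lemma metricZl f a c : g (f *: a) c = f * g a c.
Proof. by case: Hg => gL _ _; rewrite -[f *: a]addr0 gL metric0l addr0. Qed.

Lemma metricNl a c : g (- a) c = - g a c.
Proof. by rewrite -scaleN1r metricZl mulN1r. Qed.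

Lemma metricDr c : {morph g c : a b / a + b}.
Proof. by move=> a b; rewrite !(metricC c) metricDl. Qed.

Lemma metric_inj a b : (forall c, g a c = g b c) -> a = b.
Proof.
move=> eq_ab; apply: subr0_eq; case: Hg => _ _; apply.
by rewrite metricDl metricNl eq_ab subrr.
Qed.

End FiberMetric.

Section VectorFields.
Variables (F : comUnitRingType) (VT : lmodType F).
Variables (act : VT -> F -> F) (brT : VT -> VT -> VT).
Hypothesis HVF : is_vector_fields act brT.

Lemma vf_actD X : {morph act X : f h / f + h}.
Proof. by move=> f h; case: HVF. Qed.

Lemma vf_actB X Y h : act (brT X Y) h = act X (act Y h) - act Y (act X h).
Proof. by case: HVF. Qed.

Let act_inj X Y : (forall h, act X h = act Y h) -> X = Y.
Proof. by case: HVF => _ _ _ inj _; apply: inj. Qed.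

Let actL f X Y h : act (f *: X + Y) h = f * act X h + act Y h.
Proof. by case: HVF. Qed.

Lemma vf_act0 h : act 0 h = 0.
Proof.
have := actL 1 0 0 h; rewrite scale1r addr0 mul1r => e.
by apply: (addrI (act 0 h)); rewrite -e addr0.
Qed.

Lemma vf_actDl h : {morph act^~ h : X Y / X + Y}.
Proof. by move=> X Y; rewrite -{1}[X]scale1r actL mul1r. Qed.

Lemma vf_actNl X h : act (- X) h = - act X h.
Proof. by rewrite -scaleN1r -[_ *: X]addr0 actL vf_act0 addr0 mulN1r. Qed.

(* Instances on section variables: a [raddf]/[linear] rewrite leaves the
   instance's [sort] projection behind, which [/=] folds back into the bare
   function. *)
HB.instance Definition _ X :=
  GRing.isNmodMorphism.Build F F (act X) (add_nmod_morphism (vf_actD X)).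

Let actM X f h : act X (f * h) = act X f * h + f * act X h.
Proof. by case: HVF. Qed.

Lemma vf_act_nat X n : act X n%:R = 0.
Proof.
have act1 : act X 1 = 0.
  have := actM X 1 1; rewrite !mulr1 mul1r => e.
  by apply: (addrI (act X 1)); rewrite -e addr0.
by elim: n => [|n IHn]; rewrite ?raddf0 // mulrS raddfD /= act1 IHn addr0.
Qed.

Lemma vf_act_natV X n : (n%:R : F) \is a GRing.unit -> act X n%:R^-1 = 0.
Proof.
move=> n_unit; apply: (mulrI n_unit); rewrite mulr0.
have := actM X n%:R n%:R^-1; rewrite divrr // vf_act_nat mul0r add0r => <-.
exact: (vf_act_nat X 1).
Qed.

Lemma vf_brN X Y : brT X Y = - brT Y X.
Proof. by apply: act_inj => h; rewrite vf_actNl !vf_actB opprB. Qed.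

Lemma vf_brDl Z : {morph brT^~ Z : X Y / X + Y}.
Proof. by move=> X Y; apply: act_inj => h; rewrite !(vf_actB, vf_actDl, raddfD) /=; ring. Qed.

Lemma vf_brDr X : {morph brT X : Y Z / Y + Z}.
Proof. by move=> Y Z; rewrite vf_brN vf_brDl opprD -!vf_brN. Qed.

Lemma vf_brJ X Y Z : brT X (brT Y Z) + brT Y (brT Z X) + brT Z (brT X Y) = 0.
Proof. by apply: act_inj => h; rewrite !vf_actDl !vf_actB !raddfB /= vf_act0; ring. Qed.

End VectorFields.

Section LeviCivitaConnection.
Variables (F : comUnitRingType) (VT V : lmodType F).
Variables (act : VT -> F -> F) (anc : V -> VT) (br : V -> V -> V).
Variables (g : V -> V -> F) (D : V -> V -> V).
Hypotheses (two_unit : (2%:R : F) \is a GRing.unit) (Hg : is_fiber_metric g).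
Hypotheses (brN : forall a b, br a b = - br b a) (KD : koszul act anc br g D).

Let metric_inj2 a b : (forall c, 2%:R * g a c = 2%:R * g b c) -> a = b.
Proof. by move=> eq2; apply: (metric_inj Hg) => c; apply: (mulrI two_unit). Qed.

Lemma koszul_torsion_free a b : D a b - D b a = br a b.
Proof.
apply: metric_inj2 => c; rewrite (metricDl Hg) (metricNl Hg) mulrDr mulrN !KD.
by rewrite (metricC Hg b a) (brN b a) (metricNl Hg); ring.
Qed.

Lemma koszul_metric a b c : act (anc a) (g b c) = g (D a b) c + g (D a c) b.
Proof.
apply: (mulrI two_unit); rewrite mulrDr !KD.
by rewrite (metricC Hg c b) (brN b a) (brN b c) (brN a c) !(metricNl Hg); ring.
Qed.

Hypotheses (actD : forall X, {morph act X : f h / f + h})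
  (actDl : forall h, {morph act^~ h : X Y / X + Y}).
Hypotheses (ancD : {morph anc : a b / a + b}) (brDr : forall a, {morph br a : b c / b + c}).

Lemma koszulDr a : {morph D a : b c / b + c}.
Proof.
move=> b c; apply: metric_inj2 => e; rewrite (metricDl Hg) mulrDr !KD.
by rewrite ancD !(actD, actDl, metricDl Hg, metricDr Hg, brDr); ring.
Qed.

End LeviCivitaConnection.

Section MetricConnectionCurvature.
Variables (F : comUnitRingType) (VT V : lmodType F).
Variables (act : VT -> F -> F) (brT : VT -> VT -> VT).
Variables (g : V -> V -> F) (nab : VT -> V -> V).
Hypotheses (HVF : is_vector_fields act brT) (Hg : is_fiber_metric g).
Hypothesis nab_metric : forall X a b, act X (g a b) = g (nab X a) b + g (nab X b) a.

Lemma curv_metric_skew X Y a b :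
  g (curv brT nab X Y a) b = - g (curv brT nab X Y b) a.
Proof.
have nab_adj Z c d : g (nab Z c) d = act Z (g c d) - g (nab Z d) c.
  by rewrite nab_metric addrK.
have nab2_adj Z W c d : g (nab Z (nab W c)) d = act Z (act W (g c d))
    - g (nab Z (nab W d)) c - g (nab Z c) (nab W d) - g (nab W c) (nab Z d).
  by rewrite (nab_metric W c d) (vf_actD HVF) !nab_metric (metricC Hg (nab Z d)); ring.
rewrite /curv !(metricDl Hg, metricNl Hg) (nab_adj (brT X Y) a b) (vf_actB HVF).
by rewrite (nab2_adj X Y a b) (nab2_adj Y X a b); ring.
Qed.

End MetricConnectionCurvature.

Section OmegaBianchi.
Variables (F : comUnitRingType) (VT VA : lmodType F).
Variables (brT : VT -> VT -> VT) (brA : VA -> VA -> VA) (gam : VT -> VA).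
Hypotheses (brTN : forall X Y, brT X Y = - brT Y X)
  (brTJ : forall X Y Z, brT X (brT Y Z) + brT Y (brT Z X) + brT Z (brT X Y) = 0).
Hypotheses (brAN : forall a b, brA a b = - brA b a)
  (brADr : forall a, {morph brA a : b c / b + c})
  (brAJ : forall a b c, brA a (brA b c) + brA b (brA c a) + brA c (brA a b) = 0).
Hypothesis gamD : {morph gam : X Y / X + Y}.

HB.instance Definition _ :=
  GRing.isNmodMorphism.Build VT VA gam (add_nmod_morphism gamD).
HB.instance Definition _ a :=
  GRing.isNmodMorphism.Build VA VA (brA a) (add_nmod_morphism (brADr a)).

Lemma Omega_Bianchi X Y Z :
  nabg brA gam X (Omega brT brA gam Y Z) + nabg brA gam Y (Omega brT brA gam Z X)
    + nabg brA gam Z (Omega brT brA gam X Y)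
  = Omega brT brA gam (brT X Y) Z + Omega brT brA gam (brT Y Z) X
    + Omega brT brA gam (brT Z X) Y.
Proof.
have brTJ' : brT (brT X Y) Z + brT (brT Y Z) X + brT (brT Z X) Y = 0.
  by rewrite !(brTN (brT _ _)) -oppr0 -(brTJ X Y Z); zmodule.
have := congr1 gam brTJ'; rewrite !raddfD raddf0 /= => gamJ.
have J := congr2 +%R (brAJ (gam X) (gam Y) (gam Z)) gamJ.
rewrite /nabg /Omega !raddfB /= !(brAN (gam (brT _ _))).
by apply: (eq_of_subr_eq (esym J)); zmodule.
Qed.

End OmegaBianchi.

Section TransitiveEuclideanLieAlgebroid.
Variables (F : comUnitRingType) (VT VA : lmodType F)
    (act : VT -> F -> F) (brT : VT -> VT -> VT)
    (rho : VA -> VT) (brA : VA -> VA -> VA) (gA : VA -> VA -> F)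
    (pt : VA -> VA) (gam : VT -> VA)
    (nablaM : VT -> VT -> VT) (D : VA -> VA -> VA).
Hypotheses (two_unit : (2%:R : F) \is a GRing.unit)
  (HVF : is_vector_fields act brT)
  (HLA : is_transitive_Lie_algebroid act brT rho brA)
  (HG : is_fiber_metric gA) (HP : is_vertical_projection rho gA pt)
  (HS : is_splitting rho gA gam)
  (KM : koszul act id brT (gT gA gam) nablaM) (KD : koszul act rho brA gA D).

Local Notation ng := (nabg brA gam).
Local Notation Om := (Omega brT brA gam).
Local Notation T := (Tt D pt).
Local Notation H := (Ht D pt).

HB.instance Definition _ X :=
  GRing.isNmodMorphism.Build F F (act X) (add_nmod_morphism (vf_actD HVF X)).
HB.instance Definition _ X :=
  GRing.isNmodMorphism.Build VT VT (brT X) (add_nmod_morphism (vf_brDr HVF X)).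

Let rho_is_linear : linear rho. Proof. by case: HLA. Qed.
HB.instance Definition _ := GRing.isLinear.Build F VA VT *:%R rho rho_is_linear.

Let brAN a b : brA a b = - brA b a. Proof. by case: HLA => _ [_ [_ []]]. Qed.
Let brAJ a b c : brA a (brA b c) + brA b (brA c a) + brA c (brA a b) = 0.
Proof. by case: HLA => _ [_ [_ [_ []]]]. Qed.
Let brAZr a f b : brA a (f *: b) = f *: brA a b + act (rho a) f *: b.
Proof. by case: HLA => _ [_ [_ [_ [_ []]]]]. Qed.
Let rho_brA a b : rho (brA a b) = brT (rho a) (rho b).
Proof. by case: HLA => _ [_ [_ [_ [_ []]]]]. Qed.
Let brADr a : {morph brA a : b c / b + c}.
Proof. by case: HLA => _ [_ [brADl _]] b c; rewrite brAN brADl opprD -!brAN. Qed.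
HB.instance Definition _ a :=
  GRing.isNmodMorphism.Build VA VA (brA a) (add_nmod_morphism (brADr a)).
HB.instance Definition _ X :=
  GRing.isNmodMorphism.Build VA VA (ng X) (add_nmod_morphism (brADr (gam X))).

Let gC := metricC HG.
Let gDl := metricDl HG.
Let gNl := metricNl HG.
Let gZl := metricZl HG.

Let pt_vert a : rho (pt a) = 0. Proof. by case: (HP a). Qed.
Let pt_orth a u : rho u = 0 -> gA (a - pt a) u = 0.
Proof. by case: (HP a) => _; apply. Qed.
Let gamK X : rho (gam X) = X. Proof. by case: (HS X). Qed.
Let gam_orth X u : rho u = 0 -> gA (gam X) u = 0.
Proof. by case: (HS X) => _; apply. Qed.

Lemma vert_orth_eq0 v : rho v = 0 -> (forall u, rho u = 0 -> gA v u = 0) -> v = 0.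
Proof. by move=> v_vert /(_ v v_vert); case: HG => _ _; apply. Qed.

Lemma pt_unique a p :
  rho p = 0 -> (forall u, rho u = 0 -> gA (a - p) u = 0) -> pt a = p.
Proof.
move=> p_vert p_orth; apply: subr0_eq; apply: vert_orth_eq0 => [|u u_vert].
  by rewrite raddfB /= pt_vert p_vert subr0.
have -> : pt a - p = (a - p) - (a - pt a) by zmodule.
by rewrite gDl gNl p_orth // pt_orth // subr0.
Qed.

Lemma pt_is_additive : {morph pt : a b / a + b}.
Proof.
move=> a b; apply: pt_unique => [|u u_vert]; first by rewrite raddfD /= !pt_vert addr0.
have -> : a + b - (pt a + pt b) = (a - pt a) + (b - pt b) by zmodule.
by rewrite gDl !pt_orth // addr0.
Qed.
HB.instance Definition _ :=
  GRing.isNmodMorphism.Build VA VA pt (add_nmod_morphism pt_is_additive).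

Lemma pt_id a : rho a = 0 -> pt a = a.
Proof. by move=> a_vert; apply: pt_unique => // u _; rewrite subrr metric0l. Qed.

Lemma pt_gam X : pt (gam X) = 0.
Proof. by apply: pt_unique => [|u u_vert]; [rewrite raddf0 | rewrite subr0 gam_orth]. Qed.

Lemma pt_perp a : pt (perp pt a) = 0.
Proof. by rewrite /perp raddfB /= (pt_id (pt_vert a)) subrr. Qed.

Lemma gam_unique X a :
  rho a = X -> (forall u, rho u = 0 -> gA a u = 0) -> gam X = a.
Proof.
move=> a_anchor a_orth; apply: subr0_eq; apply: vert_orth_eq0 => [|u u_vert].
  by rewrite raddfB /= gamK a_anchor subrr.
by rewrite gDl gNl gam_orth // a_orth // subr0.
Qed.

Lemma perp_gam a : perp pt a = gam (rho a).
Proof.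
by symmetry; apply: gam_unique => [|u]; [rewrite raddfB /= pt_vert subr0 | exact: pt_orth].
Qed.

Lemma gam_is_linear : linear gam.
Proof.
move=> f X Y; apply: gam_unique => [|u u_vert]; first by rewrite linearP /= !gamK.
by rewrite gDl gZl !gam_orth // mulr0 addr0.
Qed.
HB.instance Definition _ := GRing.isLinear.Build F VT VA *:%R gam gam_is_linear.

Lemma gT_fiber_metric : is_fiber_metric (gT gA gam).
Proof.
rewrite /gT; split=> [f X Y Z|X Y|X]; first by rewrite linearP /= gDl gZl.
  exact: gC.
by case: HG => _ _ gA_def /gA_def gamX0; rewrite -(gamK X) gamX0 raddf0.
Qed.

Let D_torsion a b : D a b - D b a = brA a b :=
  koszul_torsion_free two_unit HG brAN KD a b.
Let nablaM_torsion X Y : nablaM X Y - nablaM Y X = brT X Y :=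
  koszul_torsion_free two_unit gT_fiber_metric (vf_brN HVF) KM X Y.
Let D_metric a b c : act (rho a) (gA b c) = gA (D a b) c + gA (D a c) b :=
  koszul_metric two_unit HG brAN KD a b c.

Lemma D_is_additive a : {morph D a : b c / b + c}.
Proof.
apply: (koszulDr two_unit HG KD (vf_actD HVF) (vf_actDl HVF) _ brADr).
exact: raddfD.
Qed.
HB.instance Definition _ a :=
  GRing.isNmodMorphism.Build VA VA (D a) (add_nmod_morphism (D_is_additive a)).

Lemma rho_Omega X Y : rho (Om X Y) = 0.
Proof. by rewrite /Omega raddfB /= rho_brA !gamK subrr. Qed.

Lemma gA_Omega_gam X Y Z : gA (Om X Y) (gam Z) = 0.
Proof. by rewrite gC gam_orth ?rho_Omega. Qed.

Lemma brA_gam X Y : brA (gam X) (gam Y) = gam (brT X Y) - Om X Y.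
Proof. by rewrite /Omega opprB addrC subrK. Qed.

Lemma OmegaN X Y : Om X Y = - Om Y X.
Proof. by rewrite /Omega (vf_brN HVF X) raddfN /= (brAN (gam X)); zmodule. Qed.

Lemma OmegaDr X : {morph Om X : Y Z / Y + Z}.
Proof. by move=> Y Z; rewrite /Omega !raddfD /=; zmodule. Qed.
HB.instance Definition _ X :=
  GRing.isNmodMorphism.Build VT VA (Om X) (add_nmod_morphism (OmegaDr X)).

Lemma nabMOmega_expand X Y Z :
  nabMOmega brT brA gam nablaM Z X Y =
  Om (brT X Y) Z - Om X (nablaM Y Z) - ng X (Om Y Z)
  + Om Y (nablaM X Z) + ng Y (Om X Z).
Proof.
have nablaM_swap V W : nablaM V W = nablaM W V + brT V W.
  by rewrite -nablaM_torsion addrC subrK.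
rewrite /nabMOmega (nablaM_swap Y Z) (nablaM_swap X Z) !OmegaDr.
rewrite (OmegaN Y (nablaM Z X)) (OmegaN X (brT Y Z)) (vf_brN HVF X Z).
rewrite (OmegaN X Z) !raddfN /= (OmegaN Y (brT Z X)).
by apply: (eq_of_subr_eq (Omega_Bianchi (vf_brN HVF) (vf_brJ HVF) brAN brADr brAJ
  (raddfD gam) X Y Z)); zmodule.
Qed.

Lemma Tt_vert_hor a b : pt a = a -> pt b = 0 -> T a b = pt (D a b).
Proof.
by move=> a_vert b_hor; rewrite /Tt /perp a_vert b_hor !(raddf0, subr0, addr0, add0r).
Qed.

Lemma Ht_hor_vert a b : pt a = 0 -> pt b = b -> H a b = perp pt (D a b).
Proof.
by move=> a_hor b_vert; rewrite /Ht /perp a_hor b_vert subrr !(raddf0, subr0, addr0, add0r).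
Qed.

Lemma Ht_hor_hor a b : pt a = 0 -> pt b = 0 -> H a b = pt (D a b).
Proof.
by move=> a_hor b_hor; rewrite /Ht /perp a_hor b_hor !(raddf0, subr0, addr0, add0r).
Qed.

Lemma rho_D_gam X Z : rho (D (gam X) (gam Z)) = nablaM X Z.
Proof.
apply: (metric_inj gT_fiber_metric) => W; apply: (mulrI two_unit).
rewrite KM /gT -perp_gam /perp gDl gNl (gC (pt _)) (gam_orth _ (pt_vert _)) subr0 KD.
by rewrite !gamK !brA_gam !gDl !gNl !gA_Omega_gam !subr0; ring.
Qed.

Lemma pt_D_gam X Z : pt (D (gam X) (gam Z)) = - (2%:R^-1 *: Om X Z).
Proof.
apply: pt_unique => [|u u_vert].
  by rewrite raddfN /= linearZ /= rho_Omega scaler0 oppr0.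
have brA_vert V : rho (brA u (gam V)) = 0.
  by rewrite rho_brA u_vert gamK (vf_brN HVF) raddf0 oppr0.
have two_gA : 2%:R * gA (D (gam X) (gam Z)) u = - gA (Om X Z) u.
  rewrite KD u_vert (vf_act0 HVF) !gam_orth // !raddf0 !add0r.
  rewrite (gC (brA u _)) (gam_orth _ (brA_vert X)) (gC (brA u _)).
  rewrite (gam_orth _ (brA_vert Z)) add0r.
  by rewrite brA_gam gDl gNl gam_orth // !add0r.
rewrite opprK gDl gZl -[gA (D _ _) u](mulKr two_unit) two_gA.
by rewrite mulrN addNr.
Qed.

Lemma H_gam_gam X Z : H (gam X) (gam Z) = - (2%:R^-1 *: Om X Z).
Proof. by rewrite (Ht_hor_hor (pt_gam X) (pt_gam Z)) pt_D_gam. Qed.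

Lemma rho_H_gam X Z : rho (H (gam X) (gam Z)) = 0.
Proof. by rewrite (Ht_hor_hor (pt_gam X) (pt_gam Z)) pt_vert. Qed.

Lemma D_gam_gam X Z : D (gam X) (gam Z) = gam (nablaM X Z) + H (gam X) (gam Z).
Proof. by rewrite (Ht_hor_hor (pt_gam X) (pt_gam Z)) -rho_D_gam -perp_gam subrK. Qed.

Lemma rho_nabg X U : rho U = 0 -> rho (ng X U) = 0.
Proof. by move=> U_vert; rewrite /nabg rho_brA U_vert raddf0. Qed.

Lemma pt_D_gam_vert X U : rho U = 0 -> pt (D (gam X) U) = ng X U + T U (gam X).
Proof.
move=> U_vert; rewrite (Tt_vert_hor (pt_id U_vert) (pt_gam X)).
rewrite -[D (gam X) U](subrK (D U (gam X))) D_torsion raddfD /=.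
by rewrite (pt_id (rho_nabg X U_vert)).
Qed.

Lemma D_gam_vert X U : rho U = 0 -> D (gam X) U = ng X U + T U (gam X) + H (gam X) U.
Proof.
move=> U_vert; rewrite -(pt_D_gam_vert X U_vert).
by rewrite (Ht_hor_vert (pt_gam X) (pt_id U_vert)) /perp addrC subrK.
Qed.

Lemma rho_T_vert X U : rho U = 0 -> rho (T U (gam X)) = 0.
Proof. by move=> U_vert; rewrite (Tt_vert_hor (pt_id U_vert) (pt_gam X)) pt_vert. Qed.

Lemma pt_H_vert X U : rho U = 0 -> pt (H (gam X) U) = 0.
Proof. by move=> U_vert; rewrite (Ht_hor_vert (pt_gam X) (pt_id U_vert)) pt_perp. Qed.

Lemma nabg_half X V : ng X (- (2%:R^-1 *: V)) = - (2%:R^-1 *: ng X V).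
Proof.
by rewrite raddfN /= /nabg brAZr gamK (vf_act_natV HVF X two_unit) scale0r addr0.
Qed.

Lemma nabMOmega_half X Y Z :
  - (2%:R^-1 *: nabMOmega brT brA gam nablaM Z X Y) =
  H (gam (brT X Y)) (gam Z) - H (gam X) (gam (nablaM Y Z)) - ng X (H (gam Y) (gam Z))
  + H (gam Y) (gam (nablaM X Z)) + ng Y (H (gam X) (gam Z)).
Proof.
rewrite nabMOmega_expand !H_gam_gam !nabg_half 2!scalerDr 2!scalerBr.
zmodule.
Qed.

(* A repeated additivity rewrite must not meet an argument [Om _ _], [T _ _]
   or [H _ _]: matching unfolds these definitions into sums.  The curvature
   computations therefore split sums only through the next two lemmas and
   single first-occurrence rewrites. *)
Lemma D_gam_split X W V : rho V = 0 ->
  D (gam X) (gam W + V) =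
  gam (nablaM X W) + H (gam X) (gam W) + (ng X V + T V (gam X) + H (gam X) V).
Proof. by move=> V_vert; rewrite raddfD /= D_gam_gam D_gam_vert. Qed.

Lemma pt_D_gam_sum X V W b : rho V = 0 -> rho W = 0 -> pt b = 0 ->
  pt (D (gam X) (V + W + b)) =
  ng X V + T V (gam X) + (ng X W + T W (gam X)) + H (gam X) b.
Proof.
move=> V_vert W_vert b_hor; rewrite !raddfD /= (pt_D_gam_vert X V_vert).
by rewrite (pt_D_gam_vert X W_vert) (Ht_hor_hor (pt_gam X) b_hor).
Qed.

Lemma curv_nabA_gam X Y Z :
  curv brT (nabA D gam) X Y (gam Z) =
    (gam (curv brT nablaM X Y Z) + H (gam Y) (H (gam X) (gam Z))
       - H (gam X) (H (gam Y) (gam Z)))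
  + (T (H (gam X) (gam Z)) (gam Y) - T (H (gam Y) (gam Z)) (gam X)
       - (2%:R)^-1 *: nabMOmega brT brA gam nablaM Z X Y).
Proof.
rewrite /curv raddfD raddfB /= /nabA !D_gam_gam.
rewrite (D_gam_split X (nablaM Y Z) (rho_H_gam Y Z)).
rewrite (D_gam_split Y (nablaM X Z) (rho_H_gam X Z)).
rewrite nabMOmega_half; zmodule.
Qed.

Lemma pt_curv_nabA X Y U : rho U = 0 ->
  pt (curv brT (nabA D gam) X Y U) =
    curv brT ng X Y U + H (gam Y) (H (gam X) U) - H (gam X) (H (gam Y) U)
    + T U (gam (brT X Y)) - T (ng Y U) (gam X) - ng X (T U (gam Y))
    - T (T U (gam Y)) (gam X) + T (ng X U) (gam Y) + ng Y (T U (gam X))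
    + T (T U (gam X)) (gam Y).
Proof.
move=> U_vert; rewrite /curv /nabA raddfD raddfB /=.
rewrite (D_gam_vert Y U_vert) (D_gam_vert X U_vert) (pt_D_gam_vert _ U_vert).
rewrite (pt_D_gam_sum X (rho_nabg Y U_vert) (rho_T_vert Y U_vert) (pt_H_vert Y U_vert)).
rewrite (pt_D_gam_sum Y (rho_nabg X U_vert) (rho_T_vert X U_vert) (pt_H_vert X U_vert)).
zmodule.
Qed.

Lemma curv_nabA_skew X Y a b :
  gA (curv brT (nabA D gam) X Y a) b = - gA (curv brT (nabA D gam) X Y b) a.
Proof.
by apply: (curv_metric_skew HVF HG) => Z c d; rewrite /nabA -{1}(gamK Z) D_metric.
Qed.

End TransitiveEuclideanLieAlgebroid.

Theorem proposition3p2 (F : comUnitRingType) (VT VA : lmodType F)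
    (act : VT -> F -> F) (brT : VT -> VT -> VT)
    (rho : VA -> VT) (brA : VA -> VA -> VA) (gA : VA -> VA -> F)
    (pt : VA -> VA) (gam : VT -> VA)
    (nablaM : VT -> VT -> VT) (D : VA -> VA -> VA) :
  (2%:R : F) \is a GRing.unit ->
  is_vector_fields act brT ->
  is_transitive_Lie_algebroid act brT rho brA ->
  is_fiber_metric gA ->
  is_vertical_projection rho gA pt ->
  is_splitting rho gA gam ->
  koszul act id brT (gT gA gam) nablaM ->
  koszul act rho brA gA D ->
  forall (X Y Z : VT) (U : VA), rho U = 0 ->
  let RA := curv brT (nabA D gam) in
  let Rg := curv brT (nabg brA gam) in
  let RM := curv brT nablaM in
  let ng := nabg brA gam in
  let T := Tt D pt in
  let H := Ht D pt in
  [/\ RA X Y (gam Z) =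
        (gam (RM X Y Z) + H (gam Y) (H (gam X) (gam Z))
           - H (gam X) (H (gam Y) (gam Z)))
      + (T (H (gam X) (gam Z)) (gam Y) - T (H (gam Y) (gam Z)) (gam X)
           - (2%:R)^-1 *: nabMOmega brT brA gam nablaM Z X Y),
      pt (RA X Y U) =
        Rg X Y U + H (gam Y) (H (gam X) U) - H (gam X) (H (gam Y) U)
        + T U (gam (brT X Y)) - T (ng Y U) (gam X) - ng X (T U (gam Y))
        - T (T U (gam Y)) (gam X) + T (ng X U) (gam Y) + ng Y (T U (gam X))
        + T (T U (gam X)) (gam Y) &
      gA (RA X Y U) (gam Z) = - gA (RA X Y (gam Z)) U].
Proof.
move=> two_unit HVF HLA HG HP HS KM KD X Y Z U U_vert /=; split.
- exact: (curv_nabA_gam two_unit HVF HLA HG HP HS KM KD).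
- exact: (pt_curv_nabA two_unit HVF HLA HG HP HS KD).
- exact: (curv_nabA_skew two_unit HVF HLA HG HS KD).
Qed.
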